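(* Let $d_1,d_2,d_3\ge2$ and let $|\varphi\rangle=\sum_{i=1}^{d_1}\sum_{j=1}^{d_2}\sum_{k=1}^{d_3}a_{ijk}|ijk\rangle$ be a normalized pure state in $H_1\otimes H_2\otimes H_3$. Then $$C_3^2(|\varphi\rangle)\ \ge\ \frac{1}{(d_1-1)(d_2-1)(d_3-1)}\sum C_3^2(|\varphi\rangle_{2\otimes2\otimes2}),$$ where the sum runs over all pure substates $|\varphi\rangle_{2\otimes2\otimes2}=\sum_{i\in\{i_1,i_2\}}\sum_{j\in\{j_1,j_2\}}\sum_{k\in\{k_1,k_2\}}a_{ijk}|ijk\rangle$ with $i_1\ne i_2$ in $\{1,\dots,d_1\}$, $j_1\ne j_2$ in $\{1,\dots,d_2\}$, $k_1\ne k_2$ in $\{1,\dots,d_3\}$ (unordered pairs).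
   Context: For a (not necessarily normalized) vector $|\varphi\rangle\in H_1\otimes\cdots\otimes H_N$ with $\sigma=|\varphi\rangle\langle\varphi|$, the $N$-partite concurrence is $C_N(|\varphi\rangle)=2^{1-N/2}\sqrt{(2^N-2)(\mathrm{tr}\,\sigma)^2-\sum_\alpha \mathrm{tr}(\sigma_\alpha^2)}$, where $\alpha$ runs over all $2^N-2$ nonempty proper subsets of $\{1,\dots,N\}$ and $\sigma_\alpha=\mathrm{tr}_{\bar\alpha}\sigma$. Here $N=3$ and the substates are unnormalized vectors in $\mathbb{C}^2\otimes\mathbb{C}^2\otimes\mathbb{C}^2$. *)

From mathcomp Require Import all_boot all_order all_algebra.
Set Implicit Arguments. Unset Strict Implicit. Unset Printing Implicit Defensive.
Import Order.TTheory GRing.Theory Num.Theory.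
Local Open Scope ring_scope.

Section Concurrence.
Variable C : numClosedFieldType.

(* operators on the Hilbert space with orthonormal basis indexed by T *)
Definition op (T : finType) := T -> T -> C.

Definition optr (T : finType) (A : op T) : C := \sum_(t : T) A t t.
Definition opmul (T : finType) (A B : op T) : op T :=
  fun t s => \sum_(u : T) A t u * B u s.

Definition dens (T : finType) (phi : T -> C) : op T :=
  fun x y => phi x * Num.conj (phi y).

Definition ptrR (A B : finType) (rho : op (A * B)%type) : op A :=
  fun a a' => \sum_(b : B) rho (a, b) (a', b).
Definition ptrL (A B : finType) (rho : op (A * B)%type) : op B :=
  fun b b' => \sum_(a : A) rho (a, b) (a, b').

Definition opmap (U T : finType) (f : U -> T) (rho : op T) : op U :=
  fun u u' => rho (f u) (f u').

Section Tripartite.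
Variables T1 T2 T3 : finType.
(* H1 (x) H2 (x) H3 with basis T1 * T2 * T3 = (T1 * T2) * T3 *)
Variable phi : (T1 * T2 * T3)%type -> C.

Definition sigma : op (T1 * T2 * T3)%type := dens phi.
Definition sigma12 : op (T1 * T2)%type := ptrR sigma.
Definition sigma3 : op T3 := ptrL sigma.
Definition sigma1 : op T1 := ptrR sigma12.
Definition sigma2 : op T2 := ptrL sigma12.
Definition sigma13 : op (T1 * T3)%type :=
  ptrR (opmap (fun p : T1 * T3 * T2 => (p.1.1, p.2, p.1.2)) sigma).
Definition sigma23 : op (T2 * T3)%type :=
  ptrL (opmap (fun p : T1 * (T2 * T3) => (p.1, p.2.1, p.2.2)) sigma).

Definition purity (T : finType) (A : op T) : C := optr (opmul A A).

(* sum over all 2^3 - 2 nonempty proper subsets alpha of {1,2,3} *)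
Definition sum_purities : C :=
  purity sigma1 + purity sigma2 + purity sigma3
  + purity sigma12 + purity sigma13 + purity sigma23.

(* C_3(phi) = 2^(1 - 3/2) sqrt((2^3 - 2) (tr sigma)^2 - sum_alpha tr(sigma_alpha^2)) *)
Definition concurrence3 : C :=
  (sqrtC 2)^-1 * sqrtC (((2 ^ 3 - 2)%N)%:R * (optr sigma) ^+ 2 - sum_purities).

End Tripartite.

Definition pick2 (T : finType) (u v : T) (b : 'I_2) : T :=
  if b == ord0 then u else v.

Definition substate (d1 d2 d3 : nat) (phi : ('I_d1 * 'I_d2 * 'I_d3)%type -> C)
  (i1 i2 : 'I_d1) (j1 j2 : 'I_d2) (k1 k2 : 'I_d3) :
  ('I_2 * 'I_2 * 'I_2)%type -> C :=
  fun p => phi (pick2 i1 i2 p.1.1, pick2 j1 j2 p.1.2, pick2 k1 k2 p.2).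

End Concurrence.

From mathcomp Require Import all_boot all_order all_algebra ring.
Import Order.TTheory GRing.Theory Num.Theory.
Set Implicit Arguments. Unset Strict Implicit. Unset Printing Implicit Defensive.
Local Open Scope ring_scope.

(* 1. Minor formula.  For a vector psi on A x B both reduced states of
      |psi><psi| have the same purity P, and the squared 2x2 minors of psi sum
      to 2 (tr sigma)^2 - 2 P.  The six proper subsets of {1,2,3} pair up into
      the bipartitions 12|3, 1|23 and 13|2, hence C_3^2(phi) = 1/2 sum_{x,y}
      w(x,y), where w(x,y) >= 0 collects the squared minors obtained by
      exchanging the third, first or second coordinate of x and y.
   2. Applied to every substate, the same formula turns the left-hand side into
      a nested "pair sum" of w: in each coordinate, over all i1 < i2 and all
      pairs of values in {i1, i2}.
   3. Counting.  In one coordinate, for h >= 0 the pair sum of h is at most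
      (d-1) sum h: an off-diagonal term h a a' occurs once, a diagonal one d-1
      times.  Iterating over the three coordinates gives the factor
      (d1-1)(d2-1)(d3-1). *)

Lemma sum_prod (R : nmodType) (A B : finType) (F : A * B -> R) :
  \sum_(x : A * B) F x = \sum_(a : A) \sum_(b : B) F (a, b).
Proof. by rewrite pair_bigA; apply: eq_bigr => -[a b]. Qed.

Section Bipartite.
Variables (C : numClosedFieldType) (A B : finType) (psi : A * B -> C).

Definition sqnorm : C := \sum_(x : A * B) psi x * (psi x)^*.

Definition marginal_purity : C := \sum_(x : A * B) \sum_(y : A * B)
  psi x * psi y * (psi (y.1, x.2))^* * (psi (x.1, y.2))^*.

Definition minor_sum : C := \sum_(x : A * B) \sum_(y : A * B)
  `|psi x * psi y - psi (y.1, x.2) * psi (x.1, y.2)| ^+ 2.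

Lemma purity_ptrR : purity (ptrR (dens psi)) = marginal_purity.
Proof.
rewrite /purity /optr /opmul /ptrR /dens /marginal_purity sum_prod.
apply: eq_bigr => a _; under [RHS]eq_bigr do rewrite sum_prod.
rewrite [RHS]exchange_big; apply: eq_bigr => a' _.
rewrite big_distrl /=; apply: eq_bigr => b _; rewrite big_distrr /=.
by apply: eq_bigr => b' _ /=; ring.
Qed.

Lemma purity_ptrL : purity (ptrL (dens psi)) = marginal_purity.
Proof.
rewrite /purity /optr /opmul /ptrL /dens /marginal_purity sum_prod.
under [RHS]eq_bigr => a _ do under eq_bigr => b _ do rewrite sum_prod exchange_big.
rewrite [RHS]exchange_big; apply: eq_bigr => b _ /=.
rewrite [RHS]exchange_big; apply: eq_bigr => b' _ /=.
rewrite big_distrl /=; apply: eq_bigr => a _ /=; rewrite big_distrr /=.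
by apply: eq_bigr => a' _ /=; ring.
Qed.

(* The minor sum is 2 (tr sigma)^2 - 2 tr sigma_A^2: expand |u - v|^2 and use
   the involution swapping the B-coordinates of x and y. *)
Lemma minor_sum_purity : minor_sum = sqnorm ^+ 2 *+ 2 - marginal_purity *+ 2.
Proof.
pose amp (z : (A * B) * (A * B)) := psi z.1 * psi z.2.
pose swap (z : (A * B) * (A * B)) := ((z.2.1, z.1.2), (z.1.1, z.2.2)).
have swapK : involutive swap by move=> [[a b] [a' b']].
have sum_swap (F : (A * B) * (A * B) -> C) : \sum_z F z = \sum_z F (swap z).
  exact/reindex_inj/inv_inj.
have purityE : marginal_purity = \sum_z amp z * (amp (swap z))^*.
  rewrite /marginal_purity pair_bigA; apply: eq_bigr => -[[a b] [a' b']] _.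
  by rewrite /amp /= rmorphM /=; ring.
have sqnormE : sqnorm ^+ 2 = \sum_z amp z * (amp z)^*.
  rewrite /sqnorm expr2 big_distrl /=; under eq_bigr do rewrite big_distrr /=.
  by rewrite pair_bigA; apply: eq_bigr => -[x y] _; rewrite /amp /= rmorphM /=; ring.
have minorE : minor_sum = \sum_z ((amp z * (amp z)^* + amp (swap z) * (amp (swap z))^*)
   - (amp z * (amp (swap z))^* + amp (swap z) * (amp z)^*)).
  rewrite /minor_sum pair_bigA; apply: eq_bigr => -[[a b] [a' b']] _.
  by rewrite normCK /amp /= rmorphB /= !rmorphM /=; ring.
have swap_diag : \sum_z amp (swap z) * (amp (swap z))^* = \sum_z amp z * (amp z)^*.
  by rewrite [RHS]sum_swap.
have swap_cross : \sum_z amp (swap z) * (amp z)^* = \sum_z amp z * (amp (swap z))^*.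
  by rewrite sum_swap; apply: eq_bigr => z _; rewrite swapK.
by rewrite minorE sumrB !big_split /= swap_diag swap_cross -purityE -sqnormE; ring.
Qed.
End Bipartite.

Lemma purity_ext (C : numClosedFieldType) (T : finType) (X Y : op C T) :
  (forall x y, X x y = Y x y) -> purity X = purity Y.
Proof.
move=> eqXY; rewrite /purity /optr /opmul; apply: eq_bigr => a _.
by apply: eq_bigr => b _; rewrite !eqXY.
Qed.

(* A tripartite vector phi, read as bipartite along 12|3 (phi itself), 1|23
   and 13|2. *)
Section Tripartite.
Variables (C : numClosedFieldType) (T1 T2 T3 : finType).
Variable phi : T1 * T2 * T3 -> C.

Definition phi_1_23 (p : T1 * (T2 * T3)) : C := phi (p.1, p.2.1, p.2.2).
Definition phi_13_2 (p : T1 * T3 * T2) : C := phi (p.1.1, p.2, p.1.2).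

Lemma sum_1_23 (R : nmodType) (F : T1 * (T2 * T3) -> R) :
  \sum_(x : T1 * (T2 * T3)) F x = \sum_(x : T1 * T2 * T3) F (x.1.1, (x.1.2, x.2)).
Proof.
rewrite (reindex (fun x : T1 * T2 * T3 => (x.1.1, (x.1.2, x.2)))) //.
by apply: onW_bij; exists (fun y => (y.1, y.2.1, y.2.2)) => [[[? ?] ?]|[? [? ?]]].
Qed.

Lemma sum_13_2 (R : nmodType) (F : T1 * T3 * T2 -> R) :
  \sum_(x : T1 * T3 * T2) F x = \sum_(x : T1 * T2 * T3) F ((x.1.1, x.2), x.1.2).
Proof.
rewrite (reindex (fun x : T1 * T2 * T3 => ((x.1.1, x.2), x.1.2))) //.
by apply: onW_bij; exists (fun y => (y.1.1, y.2, y.1.2)) => [[[? ?] ?]|[[? ?] ?]].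
Qed.

(* The six purities in C_3 are those of the three bipartitions, each counted
   twice, so C_3^2 is half the total minor sum of the three bipartitions. *)
Lemma concurrence3_sq_minor_sums :
  concurrence3 phi ^+ 2 =
  2^-1 * (minor_sum phi + minor_sum phi_1_23 + minor_sum phi_13_2).
Proof.
have sqnorm_1_23 : sqnorm phi_1_23 = sqnorm phi.
  by rewrite /sqnorm sum_1_23; apply: eq_bigr => -[[a b] c] _.
have sqnorm_13_2 : sqnorm phi_13_2 = sqnorm phi.
  by rewrite /sqnorm sum_13_2; apply: eq_bigr => -[[a b] c] _.
have purity1 : purity (sigma1 phi) = marginal_purity phi_1_23.
  rewrite -purity_ptrR; apply: purity_ext => a a'.
  rewrite /sigma1 /sigma12 /ptrR /dens /= sum_prod; apply: eq_bigr => b _.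
  by apply: eq_bigr => c _.
have purity2 : purity (sigma2 phi) = marginal_purity phi_13_2.
  rewrite -purity_ptrL; apply: purity_ext => b b'.
  rewrite /sigma2 /sigma12 /ptrR /ptrL /dens /= sum_prod; apply: eq_bigr => a _.
  by apply: eq_bigr => c _.
have purity3 : purity (sigma3 phi) = marginal_purity phi by rewrite -purity_ptrL.
have purity12 : purity (sigma12 phi) = marginal_purity phi by rewrite -purity_ptrR.
have purity13 : purity (sigma13 phi) = marginal_purity phi_13_2 by rewrite -purity_ptrR.
have purity23 : purity (sigma23 phi) = marginal_purity phi_1_23 by rewrite -purity_ptrL.
rewrite !minor_sum_purity sqnorm_1_23 sqnorm_13_2 /concurrence3 /sum_purities.
rewrite purity1 purity2 purity3 purity12 purity13 purity23.
rewrite exprMn sqrtCK exprVn sqrtCK.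
have -> : (2 ^ 3 - 2)%N = 6%N by [].
by rewrite -[optr (sigma phi)]/(sqnorm phi); congr (_ * _); ring.
Qed.

(* The squared 2x2 minors of phi at basis indices x, y, one per bipartition. *)
Definition minor_weight (x y : T1 * T2 * T3) : C :=
  `|phi x * phi y - phi (y.1, x.2) * phi (x.1, y.2)| ^+ 2
  + `|phi x * phi y - phi ((y.1.1, x.1.2), x.2) * phi ((x.1.1, y.1.2), y.2)| ^+ 2
  + `|phi x * phi y - phi ((y.1.1, x.1.2), y.2) * phi ((x.1.1, y.1.2), x.2)| ^+ 2.

Lemma minor_weight_ge0 (x y : T1 * T2 * T3) : 0 <= minor_weight x y.
Proof. by rewrite /minor_weight !addr_ge0 ?exprn_ge0. Qed.

Lemma concurrence3_sq : concurrence3 phi ^+ 2 = 2^-1 * \sum_x \sum_y minor_weight x y.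
Proof.
rewrite concurrence3_sq_minor_sums; congr (_ * _).
rewrite /minor_sum sum_1_23 sum_13_2 -!big_split /=; apply: eq_bigr => -[[a b] c] _.
by rewrite sum_1_23 sum_13_2 -!big_split /=; apply: eq_bigr => -[[a' b'] c'] _.
Qed.
End Tripartite.

Lemma sum_lt_pairs_sym (R : nmodType) (d : nat) (F : 'I_d -> 'I_d -> R) :
  \sum_(i1 < d) \sum_(i2 < d | (i1 < i2)%N) (F i1 i2 + F i2 i1) =
  \sum_(i1 < d) \sum_(i2 < d | i2 != i1) F i1 i2.
Proof.
under eq_bigr do rewrite big_split /=.
rewrite big_split /=.
rewrite [X in _ + X](exchange_big_dep xpredT) //= -big_split /=.
apply: eq_bigr => i1 _; rewrite [RHS](bigID (fun i2 : 'I_d => (i1 < i2)%N)) /=.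
congr (_ + _); apply: eq_bigl => i2.
  by rewrite andb_idl // => lt12; apply: contraTneq lt12 => ->; rewrite ltnn.
by rewrite -leqNgt ltn_neqAle.
Qed.

Lemma sum_lt_pairs_exchange (R : nmodType) (d : nat) (X : finType)
    (F : 'I_d -> 'I_d -> X -> R) :
  \sum_(i1 < d) \sum_(i2 < d | (i1 < i2)%N) \sum_(x : X) F i1 i2 x =
  \sum_(x : X) \sum_(i1 < d) \sum_(i2 < d | (i1 < i2)%N) F i1 i2 x.
Proof. by under eq_bigr do rewrite exchange_big; rewrite exchange_big. Qed.

Lemma sum_interleave (R : nmodType) (A1 A2 A3 : finType)
    (F : A1 * A2 * A3 -> A1 * A2 * A3 -> R) :
  \sum_(x : A1 * A2 * A3) \sum_(y : A1 * A2 * A3) F x y =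
  \sum_(v1 : A1 * A1) \sum_(v2 : A2 * A2) \sum_(v3 : A3 * A3)
     F ((v1.1, v2.1), v3.1) ((v1.2, v2.2), v3.2).
Proof.
rewrite pair_bigA [RHS]pair_bigA [RHS]pair_bigA /=.
pose join (w : (A1 * A1) * (A2 * A2) * (A3 * A3)) :=
  (((w.1.1.1, w.1.2.1), w.2.1), ((w.1.1.2, w.1.2.2), w.2.2)).
pose split (z : (A1 * A2 * A3) * (A1 * A2 * A3)) :=
  (((z.1.1.1, z.2.1.1), (z.1.1.2, z.2.1.2)), (z.1.2, z.2.2)).
rewrite (reindex join); last first.
  by apply: onW_bij; exists split => [[[[? ?] [? ?]] [? ?]]|[[[? ?] ?] [[? ?] ?]]].
by apply: eq_bigr => -[[[? ?] [? ?]] [? ?]].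
Qed.

(* For h on [d] x [d]: the sum, over all i1 < i2, of h on the four pairs of
   values in {i1, i2}.  This is how one coordinate enters a substate. *)
Definition pair_sum (R : nmodType) (d : nat) (h : 'I_d -> 'I_d -> R) : R :=
  \sum_(i1 < d) \sum_(i2 < d | (i1 < i2)%N) \sum_(w : 'I_2 * 'I_2)
    h (pick2 i1 i2 w.1) (pick2 i1 i2 w.2).

Section PairSum.
Variables (R : numDomainType) (d : nat).
Hypothesis hd : (2 <= d)%N.

(* Counting in one coordinate: a diagonal term h a a is met d-1 times, an
   off-diagonal term h a a' only once. *)
Lemma pair_sum_le (h : 'I_d -> 'I_d -> R) :
  (forall a a', 0 <= h a a') ->
  pair_sum h <= d.-1%:R * \sum_(v : 'I_d * 'I_d) h v.1 v.2.
Proof.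
move=> h_ge0; pose f a b := h a a + h a b.
have pick_sum i1 i2 : \sum_(w : 'I_2 * 'I_2) h (pick2 i1 i2 w.1) (pick2 i1 i2 w.2)
    = f i1 i2 + f i2 i1.
  rewrite sum_prod !big_ord_recl !big_ord0 /pick2 /f /=.
  by rewrite !addr0 [h i2 i1 + _]addrC.
rewrite /pair_sum (eq_bigr _ (fun i1 _ => eq_bigr _ (fun i2 _ => pick_sum i1 i2))).
rewrite sum_lt_pairs_sym sum_prod mulr_sumr; apply: ler_sum => a _.
have -> : \sum_(i2 < d | i2 != a) f a i2 = h a a *+ d.-1 + \sum_(i2 < d | i2 != a) h a i2.
  rewrite big_split /= (eq_bigl (fun i2 => i2 \in predC1 a)) //.
  by rewrite sumr_const cardC1 card_ord.
rewrite [X in _ <= _ * X](bigD1 a) //= mulrDr mulr_natl; apply: lerD => //.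
apply: ler_peMl; first exact: sumr_ge0.
by rewrite ler1n -ltnS prednK // ltnW.
Qed.

Lemma pair_sum_le_scaled (h k : 'I_d -> 'I_d -> R) (c : R) :
  0 <= c -> (forall a a', 0 <= k a a') -> (forall a a', h a a' <= c * k a a') ->
  pair_sum h <= c * d.-1%:R * \sum_(v : 'I_d * 'I_d) k v.1 v.2.
Proof.
move=> c_ge0 k_ge0 le_hk.
have pair_sumZ : pair_sum (fun a a' => c * k a a') = c * pair_sum k.
  rewrite /pair_sum mulr_sumr; apply: eq_bigr => i1 _.
  by rewrite mulr_sumr; apply: eq_bigr => i2 _; rewrite mulr_sumr.
apply: (@le_trans _ _ (pair_sum (fun a a' => c * k a a'))).
  by do 3 (apply: ler_sum => ? _); apply: le_hk.
by rewrite pair_sumZ -mulrA ler_wpM2l // pair_sum_le.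
Qed.
End PairSum.

Lemma pair_sum3_le (R : numDomainType) (d1 d2 d3 : nat)
    (hd1 : (2 <= d1)%N) (hd2 : (2 <= d2)%N) (hd3 : (2 <= d3)%N)
    (g : 'I_d1 * 'I_d2 * 'I_d3 -> 'I_d1 * 'I_d2 * 'I_d3 -> R) :
  (forall x y, 0 <= g x y) ->
  pair_sum (fun a a' => pair_sum (fun b b' => pair_sum (fun c c' =>
     g ((a, b), c) ((a', b'), c'))))
  <= (d1.-1 * d2.-1 * d3.-1)%:R * \sum_x \sum_y g x y.
Proof.
move=> g_ge0; rewrite sum_interleave.
have -> : (d1.-1 * d2.-1 * d3.-1)%:R = (d3.-1 * d2.-1)%:R * d1.-1%:R :> R.
  by rewrite -natrM; congr _%:R; ring.
apply: (pair_sum_le_scaled hd1 (k := fun a a' => \sum_(v2 : 'I_d2 * 'I_d2)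
    \sum_(v3 : 'I_d3 * 'I_d3) g ((a, v2.1), v3.1) ((a', v2.2), v3.2))).
- exact: ler0n.
- by move=> a a'; do 2 (apply: sumr_ge0 => ? _).
move=> a a'; rewrite natrM.
apply: (pair_sum_le_scaled hd2 (k := fun b b' => \sum_(v3 : 'I_d3 * 'I_d3)
    g ((a, b), v3.1) ((a', b'), v3.2))).
- exact: ler0n.
- by move=> b b'; apply: sumr_ge0.
by move=> b b'; apply: (pair_sum_le hd3) => c c'; apply: g_ge0.
Qed.

Section Substates.
Variables (d1 d2 d3 : nat).

Definition subindex (i1 i2 : 'I_d1) (j1 j2 : 'I_d2) (k1 k2 : 'I_d3)
    (p : 'I_2 * 'I_2 * 'I_2) : 'I_d1 * 'I_d2 * 'I_d3 :=
  (pick2 i1 i2 p.1.1, pick2 j1 j2 p.1.2, pick2 k1 k2 p.2).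

Lemma sum_substates_nested (R : nmodType)
    (F : 'I_d1 * 'I_d2 * 'I_d3 -> 'I_d1 * 'I_d2 * 'I_d3 -> R) :
  \sum_(i1 < d1) \sum_(i2 < d1 | (i1 < i2)%N)
  \sum_(j1 < d2) \sum_(j2 < d2 | (j1 < j2)%N)
  \sum_(k1 < d3) \sum_(k2 < d3 | (k1 < k2)%N)
  \sum_(p : 'I_2 * 'I_2 * 'I_2) \sum_(q : 'I_2 * 'I_2 * 'I_2)
     F (subindex i1 i2 j1 j2 k1 k2 p) (subindex i1 i2 j1 j2 k1 k2 q)
  = pair_sum (fun a a' => pair_sum (fun b b' => pair_sum (fun c c' =>
       F ((a, b), c) ((a', b'), c')))).
Proof.
rewrite /pair_sum /subindex.
under eq_bigr => i1 _ do under eq_bigr => i2 _ do under eq_bigr => j1 _ do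
  under eq_bigr => j2 _ do under eq_bigr => k1 _ do under eq_bigr => k2 _ do
  rewrite sum_interleave /=.
under eq_bigr => i1 _ do under eq_bigr => i2 _ do under eq_bigr => j1 _ do
  under eq_bigr => j2 _ do rewrite sum_lt_pairs_exchange.
under eq_bigr => i1 _ do under eq_bigr => i2 _ do under eq_bigr => j1 _ do
  under eq_bigr => j2 _ do under eq_bigr => v1 _ do rewrite sum_lt_pairs_exchange.
by under eq_bigr => i1 _ do under eq_bigr => i2 _ do rewrite sum_lt_pairs_exchange.
Qed.
End Substates.

Lemma substates_concurrence3_sq (C : numClosedFieldType) (d1 d2 d3 : nat)
    (phi : 'I_d1 * 'I_d2 * 'I_d3 -> C) :
  \sum_(i1 < d1) \sum_(i2 < d1 | (i1 < i2)%N)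
  \sum_(j1 < d2) \sum_(j2 < d2 | (j1 < j2)%N)
  \sum_(k1 < d3) \sum_(k2 < d3 | (k1 < k2)%N)
    (concurrence3 (substate phi i1 i2 j1 j2 k1 k2)) ^+ 2
  = 2^-1 * pair_sum (fun a a' => pair_sum (fun b b' => pair_sum (fun c c' =>
       minor_weight phi ((a, b), c) ((a', b'), c')))).
Proof.
rewrite -sum_substates_nested.
do 6 (rewrite mulr_sumr; apply: eq_bigr => ? _).
exact: concurrence3_sq.
Qed.

Theorem mainTheorem2 (C : numClosedFieldType) (d1 d2 d3 : nat)
  (hd1 : (2 <= d1)%N) (hd2 : (2 <= d2)%N) (hd3 : (2 <= d3)%N)
  (phi : ('I_d1 * 'I_d2 * 'I_d3)%type -> C)
  (hnorm : \sum_(x : ('I_d1 * 'I_d2 * 'I_d3)%type) `|phi x| ^+ 2 = 1) :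
  (((d1 - 1) * (d2 - 1) * (d3 - 1))%N%:R)^-1 *
    (\sum_(i1 < d1) \sum_(i2 < d1 | (i1 < i2)%N)
     \sum_(j1 < d2) \sum_(j2 < d2 | (j1 < j2)%N)
     \sum_(k1 < d3) \sum_(k2 < d3 | (k1 < k2)%N)
       (concurrence3 (substate phi i1 i2 j1 j2 k1 k2)) ^+ 2)
  <= (concurrence3 phi) ^+ 2.
Proof.
rewrite substates_concurrence3_sq concurrence3_sq.
set D := ((d1 - 1) * (d2 - 1) * (d3 - 1))%N.
have D_gt0 : 0 < D%:R :> C.
  by rewrite ltr0n !muln_gt0 !subn_gt0 hd1 hd2 hd3.
rewrite mulrCA ler_wpM2l ?invr_ge0 ?ler0n // ler_pdivrMl //.
by rewrite /D !subn1; apply: (pair_sum3_le hd1 hd2 hd3) => x y; apply: minor_weight_ge0.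
Qed.
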